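(* For $n\ge 0$ let $\Theta_n=\{\theta\in\mathcal{I}_n\cap\mathcal{L}: |\theta|\text{ is minimal}\}$. Then $\Theta_n=\{f^{(n)}\}$ if $n$ is odd, and $\Theta_n=\{f^{(n)},\,f^{(n)}+g^{(n)}\}$ if $n$ is even.
   Context: $\mathbb{F}=\mathrm{GF}(2)$, $R=\mathbb{F}[x,z]$, $|\cdot|$ is total degree. $M=\mathbb{F}[x^{-1},z^{-1}]$ is an $R$-module via $x^pz^q\circ x^{-u}z^{-v}=x^{p-u}z^{q-v}$ if $p\le u,q\le v$ and $0$ otherwise, extended bilinearly; $\mathcal{I}_F=\{\varphi\in R:\varphi\circ F=0\}$. $\mathcal{L}$ is the set of non-zero forms $\varphi\in R$ whose coefficient of $x^{|\varphi|}$ equals $1$. Let $(r_0,r_1,\ldots)$ be the binary sequence with $r_i=1$ if $i=2^j-1$ for some $j\ge 0$ and $r_i=0$ otherwise. For $n\ge0$, $R^{(-n)}=\sum_{j=-n}^{0}r_{-j}\,x^{j}z^{-n-j}$ and $\mathcal{I}_n=\mathcal{I}_{R^{(-n)}}$. For a form $f\in R$ and homogeneous $G\in M$, $\Delta(f;G)$ is the coefficient of $x^{|f|+|G|}z^0$ in $f\cdot G$ computed in $\mathbb{F}[x^{\pm1},z^{\pm1}]$ if $|f|+|G|\le 0$, and $0$ otherwise. Define forms recursively: $(f^{(0)},g^{(0)})=(x+z,z)$; for $k\ge0$ let $d_k=|g^{(k)}|-|f^{(k)}|$ and $\Delta_k=\Delta(f^{(k)};R^{(-1-k)})$, and set $(f^{(k+1)},g^{(k+1)})=(f^{(k)},zg^{(k)})$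 if $\Delta_k=0$; $=(f^{(k)}+x^{-d_k}g^{(k)},\,zg^{(k)})$ if $\Delta_k=1$ and $d_k\le0$; $=(x^{d_k}f^{(k)}+g^{(k)},\,zf^{(k)})$ if $\Delta_k=1$ and $d_k>0$. *)

From HB Require Import structures.
From mathcomp Require Import all_boot all_order all_algebra.
From mathcomp Require Import mpoly.

Set Implicit Arguments.
Unset Strict Implicit.
Unset Printing Implicit Defensive.

Import Order.TTheory GRing.Theory Num.Theory.
Local Open Scope ring_scope.

Notation F2 := ('F_2).
Notation R := {mpoly F2[2]}.
Definition x : R := 'X_0.
Definition z : R := 'X_1.

Definition mono2 (a b : nat) : 'X_{1..2} := [multinom [tuple a; b]].
Definition ex (m : 'X_{1..2}) : nat := tnth (multinom_val m) ord0.
Definition ez (m : 'X_{1..2}) : nat := tnth (multinom_val m) (lift ord0 ord0).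

Definition is_form (p : R) : bool := p \is homog mdeg.
Definition tdeg (p : R) : nat := (msize p).-1.

(* M = F[x^-1, z^-1].  An element of M is represented by an mpoly G in two
   variables: the monomial m of G stands for x^{-(ex m)} z^{-(ez m)}.
   Total degree of a homogeneous nonzero G is then -(tdegM G). *)
Notation M := {mpoly F2[2]}.
Definition tdegM (G : M) : nat := (msize G).-1.

(* The R-module action: x^p z^q o x^-u z^-v = x^(p-u) z^(q-v) if p<=u, q<=v,
   and 0 otherwise, extended bilinearly. *)
Definition contract (phi : R) (G : M) : M :=
  \sum_(p <- msupp phi) \sum_(u <- msupp G | (p <= u)%MM)
     (phi@_p * G@_u) *: 'X_[u - p].

Definition annihilator (G : M) : pred R := fun phi => contract phi G == 0.

Definition inL (phi : R) : bool :=
  [&& phi != 0, is_form phi & phi@_(mono2 (tdeg phi) 0) == 1].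

(* r_i = 1 iff i = 2^j - 1 for some j >= 0 (such a j is necessarily <= i). *)
Definition r (i : nat) : F2 :=
  if [exists j : 'I_i.+1, i == (2 ^ j).-1]%N then 1 else 0.

(* R^(-n) = sum_{j=-n}^0 r_{-j} x^j z^{-n-j} = sum_{i=0}^n r_i x^-i z^-(n-i). *)
Definition Rn (n : nat) : M := \sum_(i < n.+1) r i *: 'X_[mono2 i (n - i)].

Definition In (n : nat) : pred R := annihilator (Rn n).

(* Delta(f;G): coefficient of x^{|f|+|G|} z^0 in the Laurent product f*G
   (|G| = - tdegM G) if |f| + |G| <= 0, and 0 otherwise.  The monomial
   x^p0 z^p1 * x^-u0 z^-u1 equals x^{|f|+|G|} z^0 iff p1 = u1 and
   p0 - u0 = |f| - tdegM G. *)
Definition Delta (f : R) (G : M) : F2 :=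
  if (tdeg f <= tdegM G)%N then
    \sum_(p <- msupp f) \sum_(u <- msupp G |
        (ez p == ez u) && ((ex p)%:Z - (ex u)%:Z == (tdeg f)%:Z - (tdegM G)%:Z))
      f@_p * G@_u
  else 0.

Fixpoint fg (k : nat) : R * R :=
  match k with
  | 0 => (x + z, z)
  | k'.+1 =>
      let f := (fg k').1 in
      let g := (fg k').2 in
      let d : int := (tdeg g)%:Z - (tdeg f)%:Z in
      if Delta f (Rn k'.+1) == 0 then (f, z * g)
      else if d <= 0 then (f + x ^+ `|d|%N * g, z * g)
      else (x ^+ `|d|%N * f + g, z * f)
  end.

Definition fk (k : nat) : R := (fg k).1.
Definition gk (k : nat) : R := (fg k).2.

Definition inTheta (n : nat) (theta : R) : Prop :=
  [/\ theta \in In n, inL theta &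
      forall theta' : R, theta' \in In n -> inL theta' ->
        (tdeg theta <= tdeg theta')%N].

From HB Require Import structures.
From mathcomp Require Import all_boot all_order all_algebra.
From mathcomp Require Import mpoly.
From mathcomp Require Import zify ring.

Set Implicit Arguments.
Unset Strict Implicit.
Unset Printing Implicit Defensive.

Import Order.TTheory GRing.Theory Num.Theory.
Local Open Scope ring_scope.

(* A form of degree d is written x^d C(z/x) with C in F_2[t] of
   size <= d+1, and lies in L iff C(0) = 1.  Under this dictionary the
   annihilation condition theta o R^(-n) = 0 says that the coefficients of
   degrees d..n of C(t) rho(t) vanish, where rho = sum_i r_i t^i.  The
   recursion of r gives the functional equation rho = 1 + t rho^2, whose
   convergents cnum_k / cden_k (with u_(k+2) = u_(k+1) + t^2 u_k) satisfy
   cden_k rho = cnum_k + t^(2k) rho^(2k+1) and have determinant t^(2k).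
   Cross-multiplying a solution C with the convergent of index k+1
   (k = n/2) shows that C has degree n/2 + 1 and equals cden_(k+1), or
   cden_(k+1) + t cden_k when n is even ([classify]).  Finally the
   recursion defining (f^(k), g^(k)) is shown to produce exactly the forms of
   these convergents ([fg_convergents]), and the theorem follows. *)

Notation P2 := {poly 'F_2}.

Lemma F2_cases (c : 'F_2) : c = 0 \/ c = 1.
Proof. by case: c => -[|[|i]] Hi //; [left|right]; apply: val_inj. Qed.

Lemma two0 : (2%:R : P2) = 0.
Proof. by rewrite -polyC_natr (pchar_Fp_0 (isT : prime 2)) polyC0. Qed.

Lemma sqrD (p q : P2) : (p + q) ^+ 2 = p ^+ 2 + q ^+ 2.
Proof.
have -> : (p + q) ^+ 2 = p ^+ 2 + q ^+ 2 + 2%:R * (p * q) by ring.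
by rewrite two0 mul0r addr0.
Qed.

Lemma rP i : reflect (exists j, i = (2 ^ j).-1)%N
  [exists j : 'I_i.+1, i == (2 ^ j).-1]%N.
Proof.
apply: (iffP existsP) => [[j /eqP ->]|[j ->]]; first by exists j.
have hj : (j < ((2 ^ j).-1).+1)%N.
  have := ltn_expl j (isT : (1 < 2)%N); have := expn_gt0 2 j; lia.
by exists (Ordinal hj).
Qed.

Lemma r0 : r 0 = 1.
Proof. by rewrite /r; case: rP => // -[]; exists 0%N. Qed.

(* 2i+1 = 2^j - 1 iff i = 2^(j-1) - 1, and 2i+2 is never of the form 2^j - 1. *)
Lemma r_odd i : r (i.*2.+1) = r i.
Proof.
rewrite /r; case: rP => [[j Hj]|Hn]; case: rP => [[j' Hj']|Hn'] //.
- exfalso; apply: Hn'; case: j Hj => [|j]; first by rewrite expn0.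
  rewrite expnS => Hj; exists j; have := expn_gt0 2 j; lia.
- exfalso; apply: Hn; exists j'.+1; rewrite expnS; have := expn_gt0 2 j'; lia.
Qed.

Lemma r_even i : r (i.*2.+2) = 0.
Proof.
rewrite /r; case: rP => // -[[|j]]; first by rewrite expn0.
rewrite expnS => Hj; exfalso.
have := expn_gt0 2 j; case: j Hj => [|j]; first by rewrite expn0; lia.
rewrite expnS; lia.
Qed.

Definition rho (N : nat) : P2 := \poly_(i < N) r i.

Lemma coef_rho N i : (rho N)`_i = if (i < N)%N then r i else 0.
Proof. by rewrite coef_poly. Qed.

Lemma rhoS N : rho N.+1 = rho N + r N *: 'X^N.
Proof. by rewrite /rho !poly_def big_ord_recr. Qed.

Lemma X_rho_sqr N : 'X * rho N ^+ 2 = \sum_(i < N) r i *: 'X^(i.*2.+1).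
Proof.
elim: N => [|N IH]; first by rewrite /rho poly_def !big_ord0 expr0n mulr0.
rewrite rhoS big_ord_recr -IH /= sqrD mulrDr; congr (_ + _).
rewrite expr2 -scalerAl -!scalerAr scalerA -exprD -exprS.
by congr (_ *: 'X^_); [rewrite /r; case: ifP; rewrite ?mulr1 ?mulr0 | lia].
Qed.

(* The recursion r_(2i+1) = r_i, r_(2i+2) = 0 says that rho = 1 + t rho^2. *)
Lemma rho_double N : (0 < N)%N -> rho N.*2 = 1 + 'X * rho N ^+ 2.
Proof.
rewrite X_rho_sqr; elim: N => // -[|N] IH _.
  rewrite /rho poly_def !big_ord_recr !big_ord0 /= !add0r r0.
  by rewrite (r_odd 0) r0 !scale1r expr0.
rewrite [X in rho X = _](_ : _ = (N.+1).*2.+2) // rhoS rhoS IH //.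
rewrite [in RHS]big_ord_recr /= r_even r_odd scale0r addr0 addrA.
by congr (_ + _ *: 'X^_); lia.
Qed.

Lemma dvdXnP N (p : P2) : ('X^N %| p) <-> (forall i, (i < N)%N -> p`_i = 0).
Proof.
split; first by move/dvdpP => [u ->] i Hi; rewrite coefMXn Hi.
move=> H; rewrite -(poly_take_drop N p).
have -> : take_poly N p = 0.
  by apply/polyP => i; rewrite coef_take_poly coef0; case: ifP => // /H.
by rewrite add0r dvdp_mull.
Qed.

Lemma dvdXn_small m (p : P2) :
  'X^m %| p -> (size p <= m.+1)%N -> p = p`_m *: 'X^m.
Proof.
move=> /dvdXnP Hdvd Hs; apply/polyP => i; rewrite coefZ coefXn.
case: (ltngtP i m) => [Him|Hmi|->]; last by rewrite mulr1.
- by rewrite Hdvd // mulr0.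
- by rewrite (leq_sizeP _ _ Hs) ?mulr0.
Qed.

Lemma rho_trunc M M' : (M <= M')%N -> 'X^M %| rho M' - rho M.
Proof.
move=> H; apply/dvdXnP => i Hi; rewrite coefB !coef_rho Hi.
by rewrite (_ : (i < M')%N) ?subrr //; lia.
Qed.

Lemma rho_congr N : 'X^N %| rho N - (1 + 'X * rho N ^+ 2).
Proof.
case: N => [|N]; first by rewrite expr0 dvd1p.
rewrite -rho_double // -dvdpNr opprB; apply: rho_trunc; lia.
Qed.
(* Convergents of rho = 1 + t rho^2: rho is approximated by cnum k / cden k. *)
Fixpoint cden (k : nat) : P2 :=
  match k with
  | 0 => 1
  | 1 => 1 + 'X
  | (k'.+1 as k1).+1 => cden k1 + 'X^2 * cden k'
  end.

Fixpoint cnum (k : nat) : P2 :=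
  match k with
  | 0 => 0
  | 1 => 1
  | (k'.+1 as k1).+1 => cnum k1 + 'X^2 * cnum k'
  end.

Lemma cdenSS k : cden k.+2 = cden k.+1 + 'X^2 * cden k. Proof. by []. Qed.
Lemma cnumSS k : cnum k.+2 = cnum k.+1 + 'X^2 * cnum k. Proof. by []. Qed.

Arguments cden : simpl never.
Arguments cnum : simpl never.

Lemma nat_ind2 (P : nat -> Prop) :
  P 0%N -> P 1%N -> (forall k, P k -> P k.+1 -> P k.+2) -> forall k, P k.
Proof.
move=> P0 P1 PS k; suff: P k /\ P k.+1 by case.
by elim: k => [|k [Hk Hk1]]; split => //; apply: PS.
Qed.

Lemma size_rec2 (u : nat -> P2) k m :
  u k.+2 = u k.+1 + 'X^2 * u k ->
  (size (u k) <= m)%N -> (size (u k.+1) <= m.+1)%N -> (size (u k.+2) <= m.+2)%N.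
Proof.
move=> -> s0 s1; apply/leq_sizeP => i Hi; rewrite coefD coefXnM.
rewrite (leq_sizeP _ _ s1) ?add0r; last by lia.
by case: ifP => // _; apply: (leq_sizeP _ _ s0); lia.
Qed.

Lemma size_cden_le k : (size (cden k) <= k.+1)%N.
Proof.
elim/nat_ind2: k => [||k s0 s1]; first by rewrite /cden size_poly1.
  by rewrite /cden (leq_trans (size_polyD _ _)) // size_polyX size_poly1.
exact: size_rec2 (cdenSS k) s0 s1.
Qed.

Lemma size_cnum k : (size (cnum k) <= k)%N.
Proof.
elim/nat_ind2: k => [||k s0 s1]; first by rewrite /cnum size_poly0.
  by rewrite /cnum size_poly1.
exact: size_rec2 (cnumSS k) s0 s1.
Qed.

Lemma cden_top k : (cden k)`_k = 1.
Proof.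
elim/nat_ind2: k => [||k t0 _]; first by rewrite /cden coefC.
  by rewrite /cden coefD coefX coefC add0r.
rewrite cdenSS coefD coefXnM /= subn2 /= t0.
by rewrite (leq_sizeP _ _ (size_cden_le k.+1)) ?add0r.
Qed.

Lemma cden0 k : (cden k)`_0 = 1.
Proof.
elim/nat_ind2: k => [||k _ t1]; first by rewrite /cden coefC.
  by rewrite /cden coefD coefX coefC addr0.
by rewrite cdenSS coefD coefXnM /= t1 addr0.
Qed.

Lemma size_cden k : size (cden k) = k.+1.
Proof.
apply/eqP; rewrite eqn_leq size_cden_le /= ltnNge; apply/negP.
by move/leq_sizeP/(_ k (leqnn _)); rewrite cden_top => /eqP; rewrite oner_eq0.
Qed.

Lemma cden_neq0 k : cden k != 0.
Proof. by rewrite -size_poly_eq0 size_cden. Qed.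

Lemma cden_rho M j :
  'X^M %| cden j * rho M - (cnum j + 'X^(j.*2) * rho M ^+ (j.*2.+1)).
Proof.
set p := rho M; have He := rho_congr M; rewrite -/p in He.
set e := p - (1 + 'X * p ^+ 2) in He.
pose D j := cden j * p - (cnum j + 'X^(j.*2) * p ^+ (j.*2.+1)).
rewrite -/(D j); elim/nat_ind2: j => [||j H0 H1].
- by rewrite (_ : D 0%N = 0) ?dvdp0 // /D /cden /cnum double0 /=; ring.
- have -> : D 1%N = e * (1 + 'X * p) + 2%:R * ('X * p).
    by rewrite /D /e /cden /cnum /=; ring.
  by rewrite two0 mul0r addr0; apply: dvdp_mulr.
- have -> : D j.+2 = D j.+1 + 'X^2 * D j
      + 'X^(j.*2.+2) * p ^+ (j.*2.+1) * (e * (p - 1 + 'X * p ^+ 2) + 2%:R * p).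
    rewrite /D /e cdenSS cnumSS.
    have -> : (j.+2).*2 = (j.*2 + 2 + 2)%N by lia.
    have -> : (j.+1).*2 = (j.*2 + 2)%N by lia.
    have -> : (j.*2 + 2 + 2).+1 = (j.*2.+1 + 4)%N by lia.
    have -> : (j.*2 + 2).+1 = (j.*2.+1 + 2)%N by lia.
    rewrite !exprD (_ : j.*2.+2 = j.*2 + 2)%N; last by lia.
    rewrite exprD; ring.
  rewrite two0 mul0r addr0.
  apply: dvdp_add; first by apply: dvdp_add => //; apply: dvdp_mull.
  by apply: dvdp_mull; apply: dvdp_mulr.
Qed.

Lemma cden_det j : cden j.+1 * cnum j + cden j * cnum j.+1 = 'X^(j.*2).
Proof.
elim: j => [|j IH]; first by rewrite /cden /cnum mulr0 add0r mulr1 expr0.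
rewrite cdenSS cnumSS.
have -> : (cden j.+1 + 'X^2 * cden j) * cnum j.+1 + cden j.+1 * (cnum j.+1 + 'X^2 * cnum j)
   = 'X^2 * (cden j.+1 * cnum j + cden j * cnum j.+1) + 2%:R * (cden j.+1 * cnum j.+1).
  by ring.
by rewrite two0 mul0r addr0 IH -exprD; congr ('X^_); lia.
Qed.

(* cden_j has constant term 1, hence is coprime to t. *)
Lemma dvdXn_cden m j (a : P2) : 'X^m %| a * cden j -> 'X^m %| a.
Proof.
rewrite Gauss_dvdpl // coprimep_expl // coprimep_sym.
have := coprimep_XsubC (cden j) 0; rewrite polyC0 subr0 => ->.
by rewrite /root horner_coef0 cden0 oner_eq0.
Qed.

Lemma neq0_coef0 (p : P2) : p`_0 = 1 -> p != 0.
Proof. by move=> p0; apply/eqP => p0'; move: p0; rewrite p0' coef0 => /eqP; rewrite eq_sym oner_eq0. Qed.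

Lemma unit_cofactor (G g F : P2) :
  G = g * F -> F`_0 = 1 -> (size G <= size F)%N -> G`_0 = 1 -> g = 1.
Proof.
move=> -> F0 sgF gF0.
have Fnz := neq0_coef0 F0.
have gnz : g != 0 by apply: contra_neq (neq0_coef0 gF0) => ->; rewrite mul0r.
have sg : (size g <= 1)%N.
  move: sgF; rewrite size_mul //; move: Fnz gnz; rewrite -!size_poly_gt0.
  by set a := size g; set b := size F; lia.
by move: gF0; rewrite coef0M F0 mulr1 => g0; rewrite (size1_polyC sg) g0.
Qed.

Lemma pade_unique k (C Q : P2) (c : 'F_2) :
  (size C <= k.+2)%N -> (size Q <= k.+1)%N -> C`_0 = 1 ->
  C * cnum k.+1 + Q * cden k.+1 = c *: 'X^(k.*2.+1) ->
  C = cden k.+1 + c *: ('X * cden k).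
Proof.
move=> sC sQ C0 Hb.
set G := C - c *: ('X * cden k).
have E : (C * cnum k + Q * cden k) * cden k.+1 = G * 'X^(k.*2).
  have E1 : C * (cden k.+1 * cnum k + cden k * cnum k.+1)
     = (C * cnum k + Q * cden k) * cden k.+1
       + (C * cnum k.+1 + Q * cden k.+1) * cden k
       - 2%:R * (Q * cden k * cden k.+1) by ring.
  rewrite cden_det two0 mul0r subr0 Hb -!mul_polyC in E1.
  by rewrite /G -mul_polyC mulrBl E1 exprS; ring.
have /dvdXn_cden/dvdpP [g Hg] : 'X^(k.*2) %| (C * cnum k + Q * cden k) * cden k.+1.
  by rewrite E dvdp_mull.
have XnZ : ('X^(k.*2) : P2) != 0 by rewrite expf_neq0 // polyX_eq0.
have EG : g * cden k.+1 = G by apply: (mulIf XnZ); rewrite -E Hg mulrAC.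
suff g1 : g = 1 by move: EG; rewrite g1 mul1r /G => ->; rewrite subrK.
apply: (unit_cofactor (esym EG) (cden0 _)).
- rewrite size_cden; apply/leq_sizeP => i Hi.
  rewrite /G coefB coefZ coefXM (leq_sizeP _ _ sC) //.
  case: ifP => _; first by rewrite mulr0 subr0.
  by rewrite (leq_sizeP _ _ (size_cden_le k)) ?mulr0 ?subr0 //; lia.
- by rewrite /G coefB coefZ coefXM /= mulr0 subr0.
Qed.

(* The linear form a |-> sum_(j<=d) C_j r_(a-j): for d <= a it is the a-th
   coefficient of C rho.  Its vanishing for d <= a <= n is the annihilation
   condition of the binary form of degree d with coefficients C. *)
Definition rconv (d : nat) (C : P2) (a : nat) : 'F_2 :=
  \sum_(j < d.+1) C`_j * r (a - j).

Lemma rconvD d (C D : P2) a : rconv d (C + D) a = rconv d C a + rconv d D a.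
Proof. by rewrite /rconv -big_split; apply: eq_bigr => j _; rewrite coefD mulrDl. Qed.

Lemma coef_mul_rho d (C : P2) a M : (size C <= d.+1)%N -> (d <= a)%N -> (a < M)%N ->
  (C * rho M)`_a = rconv d C a.
Proof.
move=> sC da aM; rewrite coefM /rconv.
rewrite (big_ord_widen a.+1 (fun j => C`_j * r (a - j))) ?ltnS //.
rewrite [RHS]big_mkcond /=; apply: eq_bigr => -[j Hj] _ /=.
rewrite coef_rho (_ : (a - j < M)%N); last by lia.
case: ifP => // Hjd; rewrite (leq_sizeP _ _ sC) ?mul0r //; lia.
Qed.

Lemma coef_cden_rho M j a : (a < M)%N -> (j <= a)%N ->
  (cden j * rho M)`_a = if (a < j.*2)%N then 0 else (rho M ^+ (j.*2.+1))`_(a - j.*2).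
Proof.
move=> aM ja; have /dvdXnP /(_ a aM) := cden_rho M j.
rewrite coefB coefD (leq_sizeP _ _ (size_cnum j)) // add0r coefXnM.
by move/eqP; rewrite subr_eq0 => /eqP.
Qed.

Lemma coef0_rho_exp M m : (0 < M)%N -> (rho M ^+ m)`_0 = 1.
Proof.
move=> M0; elim: m => [|m IH]; first by rewrite expr0 coefC.
by rewrite exprS coef0M IH coef_rho M0 r0 mulr1.
Qed.

Lemma rconv_cden k a : (k.+1 <= a <= k.*2.+2)%N ->
  rconv k.+1 (cden k.+1) a = (a == k.*2.+2)%:R.
Proof.
move=> /andP [h1 h2].
rewrite -(@coef_mul_rho _ _ _ a.+1) ?size_cden // coef_cden_rho //.
case: ifP => Ha; first by rewrite (_ : (a == _) = false) //; apply/negbTE; lia.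
have -> : a = k.*2.+2 by lia.
by rewrite eqxx subnn coef0_rho_exp.
Qed.

Lemma size_Xcden k : (size (('X : P2) * cden k)%R <= k.+2)%N.
Proof.
apply/leq_sizeP => i Hi; rewrite coefXM; case: ifP => // _.
apply: (leq_sizeP _ _ (size_cden_le k)); lia.
Qed.

Lemma rconv_Xcden k a : (k.+1 <= a <= k.*2)%N -> rconv k.+1 ('X * cden k) a = 0.
Proof.
move=> /andP [h1 h2].
rewrite -(@coef_mul_rho _ _ _ a.+1) ?size_Xcden // -mulrA coefXM.
case: a h1 h2 => // a h1 h2 /=.
by rewrite coef_cden_rho //; case: ifP => //; lia.
Qed.

Lemma annihilation_congr n d (C : P2) :
  (size C <= d.+1)%N -> (forall a, (d <= a <= n)%N -> rconv d C a = 0) ->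
  'X^(n.+1) %| C * rho n.+2 - take_poly d (C * rho n.+2).
Proof.
move=> sC Hann; apply/dvdXnP => i Hi; rewrite coefB coef_take_poly.
case: ifP => Hid; first by rewrite subrr.
rewrite subr0 (@coef_mul_rho d) //; try lia.
by apply: Hann; apply/andP; split; lia.
Qed.

Lemma size_mul_le (p q : P2) a b : (size p <= a)%N -> (size q <= b)%N ->
  (size (p * q)%R <= (a + b).-1)%N.
Proof. by move=> Hp Hq; apply: (leq_trans (size_polyMleq p q)); lia. Qed.

Lemma pade_remainder n k d (C Q : P2) :
  (k.*2 <= n <= k.*2.+1)%N -> (d <= k.+1)%N ->
  (size C <= d.+1)%N -> (size Q <= d)%N -> 'X^(n.+1) %| C * rho n.+2 - Q ->
  exists c : 'F_2, C * cnum k.+1 + Q * cden k.+1 = c *: 'X^(k.*2.+1)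
    /\ ((n == k.*2.+1) || (d <= k)%N -> c = 0).
Proof.
move=> /andP [n1 n2] dk sC sQ HCQ.
have HD := cden_rho n.+2 k.+1.
set p := rho n.+2 in HCQ HD *.
set be := C * cnum k.+1 + Q * cden k.+1.
have Ebe : be = - (C * (cden k.+1 * p - (cnum k.+1 + 'X^(k.+1.*2) * p ^+ (k.+1.*2.+1))))
    - 'X^(k.+1.*2) * (C * p ^+ (k.+1.*2.+1)) - (C * p - Q) * cden k.+1
    + 2%:R * (C * cden k.+1 * p) by rewrite /be; ring.
have Xle m : (n.+1 <= m)%N -> 'X^(n.+1) %| ('X^m : P2) by move=> Hm; apply: dvdp_exp2l.
have Hbe : 'X^(n.+1) %| be.
  rewrite Ebe two0 mul0r addr0.
  apply: dvdp_sub; [apply: dvdp_sub|].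
  - by rewrite dvdpNr; apply: dvdp_mull; apply: dvdp_trans HD; rewrite dvdp_exp2l.
  - by apply: dvdp_mulr; apply: Xle; lia.
  - exact: dvdp_mulr.
have sbe : (size be <= d + k.+1)%N.
  apply: (leq_trans (size_polyD _ _)); rewrite geq_max; apply/andP; split.
    by apply: (leq_trans (size_mul_le sC (size_cnum _))); lia.
  by apply: (leq_trans (size_mul_le sQ (size_cden_le _))); lia.
exists be`_(k.*2.+1); split.
  by apply: dvdXn_small; [apply: dvdp_trans Hbe; rewrite dvdp_exp2l | lia].
case/orP => [/eqP En|dlek].
  by move/dvdXnP: Hbe; apply; rewrite En.
by apply: (leq_sizeP _ _ sbe); lia.
Qed.

Lemma classify n d (C : P2) :
  (size C <= d.+1)%N -> C`_0 = 1 -> (d <= (n./2).+1)%N ->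
  (forall a, (d <= a <= n)%N -> rconv d C a = 0) ->
  d = (n./2).+1 /\
  (C = cden (n./2).+1 \/ (~~ odd n /\ C = cden (n./2).+1 + 'X * cden (n./2))).
Proof.
move=> sC C0 dk Hann; set k := n./2 in dk *.
have Hn : (odd n + k.*2 = n)%N by rewrite odd_double_half.
have nk : (k.*2 <= n <= k.*2.+1)%N by apply/andP; split; case: (odd n) Hn; lia.
have sQ : (size (take_poly d (C * rho n.+2)) <= d)%N by apply: size_take_poly.
have [c [Hbe Hc]] := pade_remainder nk dk sC sQ (annihilation_congr sC Hann).
have EC : C = cden k.+1 + c *: ('X * cden k).
  by apply: pade_unique Hbe => //; lia.
have dk1 : d = k.+1.
  apply/eqP; rewrite eqn_leq dk /= ltnNge; apply/negP => dlek.
  move: sC; rewrite EC Hc ?dlek ?orbT // scale0r addr0 size_cden; lia.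
split=> //; case: (F2_cases c) => c1; first by left; rewrite EC c1 scale0r addr0.
right; rewrite EC c1 scale1r; split=> //; apply/negP => on.
have : c = 0 by apply: Hc; rewrite -Hn on eqxx.
by rewrite c1 => /eqP; rewrite oner_eq0.
Qed.

Definition o1 : 'I_2 := lift ord0 ord0.

Lemma I2_cases (i : 'I_2) : i = ord0 \/ i = o1.
Proof. by case: i => -[|[|]] Hi //; [left|right]; apply: val_inj. Qed.

Lemma mono2_ext (m : 'X_{1..2}) : m = mono2 (m ord0) (m o1).
Proof. by apply/mnmP => i; case: (I2_cases i) => ->. Qed.

Lemma mono2_inj a b a' b' : mono2 a b = mono2 a' b' -> a = a' /\ b = b'.
Proof.
move=> H; have := congr1 (fun m : 'X_{1..2} => m ord0) H.
by have := congr1 (fun m : 'X_{1..2} => m o1) H.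
Qed.

Lemma eq_mono2 a b a' b' : (mono2 a b == mono2 a' b') = (a == a') && (b == b').
Proof. by apply/eqP/andP => [/mono2_inj [-> ->]|[/eqP -> /eqP ->]]. Qed.

Lemma mdeg_mono2 a b : mdeg (mono2 a b) = (a + b)%N.
Proof. by rewrite mdegE big_ord_recr big_ord_recr big_ord0. Qed.

Lemma lem_mono2 a b a' b' :
  (mono2 a b <= mono2 a' b')%MM = (a <= a')%N && (b <= b')%N.
Proof.
apply/mnm_lepP/andP => [H|[H1 H2] i]; first by split; [exact: (H ord0)|exact: (H o1)].
by case: (I2_cases i) => ->.
Qed.

Lemma sub_mono2 a b a' b' : (mono2 a' b' - mono2 a b)%MM = mono2 (a' - a) (b' - b).
Proof. by apply/mnmP => i; rewrite mnmBE; case: (I2_cases i) => ->. Qed.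

Lemma add_mono2 a b a' b' : (mono2 a' b' + mono2 a b)%MM = mono2 (a' + a) (b' + b).
Proof. by apply/mnmP => i; rewrite mnmDE; case: (I2_cases i) => ->. Qed.

Lemma ex_mono2 a b : ex (mono2 a b) = a. Proof. by []. Qed.
Lemma ez_mono2 a b : ez (mono2 a b) = b. Proof. by []. Qed.

Lemma mono2_00 : mono2 0 0 = 0%MM.
Proof. by apply/mnmP => i; rewrite mnm0E; case: (I2_cases i) => ->. Qed.

Lemma xE : x = 'X_[mono2 1 0].
Proof. by rewrite /x; congr 'X_[_]; apply/mnmP => i; rewrite mnm1E; case: (I2_cases i) => ->. Qed.

Lemma zE : z = 'X_[mono2 0 1].
Proof. by rewrite /z; congr 'X_[_]; apply/mnmP => i; rewrite mnm1E; case: (I2_cases i) => ->. Qed.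

Lemma sum_msupp (p : R) K (mf : 'I_K -> 'X_{1..2}) (V : nmodType)
    (h : 'X_{1..2} -> V) :
  injective mf -> (forall m, p@_m != 0 -> exists j, m = mf j) ->
  (forall m, p@_m = 0 -> h m = 0) ->
  \sum_(m <- msupp p) h m = \sum_(j < K) h (mf j).
Proof.
move=> inj hsupp h0.
rewrite -(big_map mf xpredT h); symmetry.
rewrite (eq_bigr (fun m => if m \in msupp p then h m else 0)); last first.
  move=> m _; case: ifP => // /negbT.
  by rewrite mcoeff_msupp negbK => /eqP /h0.
rewrite -big_mkcond -big_filter; apply: perm_big; apply: uniq_perm.
- by apply: filter_uniq; rewrite map_inj_uniq // index_enum_uniq.
- exact: msupp_uniq.
move=> m; rewrite mem_filter; apply/andP/idP => [[]//|Hm].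
split => //; move: Hm; rewrite mcoeff_msupp => /hsupp [j ->].
by apply: map_f; rewrite mem_index_enum.
Qed.

Lemma sum_pick K (V : nmodType) (F : 'I_K -> V) i0 (Hi0 : (i0 < K)%N) :
  (forall i : 'I_K, val i != i0 -> F i = 0) -> \sum_(i < K) F i = F (Ordinal Hi0).
Proof. by move=> H; rewrite (bigD1 (Ordinal Hi0)) //= big1 ?addr0. Qed.

(* Dehomogenization: the binary form of degree d attached to C,
   form d C = sum_(j<=d) C_j x^(d-j) z^j, so that t plays the role of z/x. *)
Definition form (d : nat) (C : P2) : R :=
  \sum_(j < d.+1) C`_j *: 'X_[mono2 (d - j) j].

Lemma form_coef d C a b :
  (form d C)@_(mono2 a b) = if (a + b == d)%N then C`_b else 0.
Proof.
rewrite /form raddf_sum /=.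
under eq_bigr => j _ do rewrite mcoeffZ mcoeffX eq_mono2.
case: ifP => Hab.
  have Hb : (b < d.+1)%N by move/eqP: Hab; lia.
  rewrite (sum_pick Hb) /=.
    by rewrite (_ : ((d - b)%N == a) = true) ?eqxx ?mulr1 //; apply/eqP; lia.
  move=> j Hj; case: andP => [[_ /eqP Hjb]|]; last by rewrite mulr0.
  by rewrite Hjb eqxx in Hj.
apply: big1 => j _; case: andP => [[/eqP H1 /eqP H2]|]; last by rewrite mulr0.
by exfalso; move/negbT: Hab => /eqP; apply; have := ltn_ord j; lia.
Qed.

Lemma form_supp d (C : P2) m :
  (form d C)@_m != 0 -> exists j : 'I_d.+1, m = mono2 (d - j) j.
Proof.
rewrite [m]mono2_ext form_coef; case: ifP => // /eqP H _.
have Hj : (m o1 < d.+1)%N by lia.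
by exists (Ordinal Hj) => /=; congr mono2; lia.
Qed.

Lemma inj_form d : injective (fun j : 'I_d.+1 => mono2 (d - j) j).
Proof. by move=> j1 j2 /mono2_inj [_ H]; apply: val_inj. Qed.

Lemma form_homog d (C : P2) : form d C \is d.-homog.
Proof.
rewrite /form; apply: rpred_sum => j _; apply: rpredZ.
rewrite dhomogX; change (mdeg (mono2 (d - j) j) == d).
by rewrite mdeg_mono2 subnK // -ltnS.
Qed.

Lemma msize_homog d (p : R) : p != 0 -> p \is d.-homog -> msize p = d.+1.
Proof. by move=> pnz /dhomogP H; rewrite -mlead_deg // H // mlead_supp. Qed.

Lemma form_neq0 d (C : P2) : (size C <= d.+1)%N -> C != 0 -> form d C != 0.
Proof.
move=> sC Cnz; apply/eqP => H0.
have Hl : ((size C).-1 < d.+1)%N by move: sC; rewrite -size_poly_gt0 in Cnz; lia.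
have := form_coef d C (d - (size C).-1) (size C).-1.
rewrite H0 mcoeff0 subnK; last by lia.
rewrite eqxx => /esym /eqP; rewrite -lead_coefE lead_coef_eq0.
by move/eqP => C0; move: Cnz; rewrite C0 eqxx.
Qed.

Lemma tdeg_form d (C : P2) : (size C <= d.+1)%N -> C != 0 -> tdeg (form d C) = d.
Proof.
by move=> sC Cnz; rewrite /tdeg (msize_homog (form_neq0 sC Cnz) (form_homog d C)).
Qed.

Lemma formD d (C D : P2) : form d (C + D) = form d C + form d D.
Proof. by rewrite /form -big_split; apply: eq_bigr => j _; rewrite coefD scalerDl. Qed.

Lemma form_one : form 0 1 = 1.
Proof. by rewrite /form big_ord1 /= coefC /= scale1r mono2_00 mpolyX0. Qed.

Lemma form_x d (C : P2) : (size C <= d.+1)%N -> x * form d C = form d.+1 C.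
Proof.
move=> sC; rewrite /form [RHS]big_ord_recr /= (leq_sizeP _ _ sC) // scale0r addr0.
rewrite mulr_sumr; apply: eq_bigr => j _.
rewrite -scalerAr xE -mpolyXD add_mono2; congr (_ *: 'X_[mono2 _ _]).
have := ltn_ord j; lia.
Qed.

Lemma form_z d (C : P2) : z * form d C = form d.+1 ('X * C).
Proof.
rewrite /form [RHS]big_ord_recl /= coefXM eqxx scale0r add0r.
rewrite mulr_sumr; apply: eq_bigr => j _.
rewrite -scalerAr zE -mpolyXD add_mono2 coefXM /= /bump /=.
by rewrite add1n add0n subSS.
Qed.

Lemma inL_form d (C : P2) : (size C <= d.+1)%N -> C`_0 = 1 -> inL (form d C).
Proof.
move=> sC C0; have Cnz := neq0_coef0 C0.
apply/and3P; split; first exact: form_neq0.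
  by apply: homogE (form_homog d C).
by rewrite tdeg_form // form_coef addn0 eqxx C0.
Qed.

Definition coefs (theta : R) : P2 :=
  \poly_(j < (tdeg theta).+1) theta@_(mono2 (tdeg theta - j) j).

Lemma inL_formE theta : inL theta ->
  [/\ theta = form (tdeg theta) (coefs theta),
      (size (coefs theta) <= (tdeg theta).+1)%N & (coefs theta)`_0 = 1].
Proof.
move=> /and3P [tnz Hf /eqP H0].
have Hh : theta \is (tdeg theta).-homog by move: Hf; rewrite /is_form homog_msize.
split; [|exact: size_poly|by rewrite coef_poly /= subn0].
apply/mpolyP => m; rewrite [m]mono2_ext form_coef.
case: ifP => Hab.
  rewrite coef_poly (_ : (_ < _)%N); last by move/eqP: Hab; lia.
  congr (theta@_(mono2 _ _)); move/eqP: Hab; lia.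
apply: (dhomog_nemf_coeff Hh); change (mdeg (mono2 (m ord0) (m o1)) != tdeg theta).
by rewrite mdeg_mono2; exact/negbT.
Qed.

Lemma Rn_coef n a b :
  (Rn n)@_(mono2 a b) = if (a + b == n)%N then r a else 0.
Proof.
rewrite /Rn raddf_sum /=.
under eq_bigr => j _ do rewrite mcoeffZ mcoeffX eq_mono2.
case: ifP => Hab.
  have Ha : (a < n.+1)%N by move/eqP: Hab; lia.
  rewrite (sum_pick Ha) /=.
    by rewrite eqxx (_ : ((n - a)%N == b) = true) ?mulr1 //; apply/eqP; lia.
  move=> j Hj; case: andP => [[/eqP Hja _]|]; last by rewrite mulr0.
  by rewrite Hja eqxx in Hj.
apply: big1 => j _; case: andP => [[/eqP H1 /eqP H2]|]; last by rewrite mulr0.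
by exfalso; move/negbT: Hab => /eqP; apply; have := ltn_ord j; lia.
Qed.

Lemma Rn_supp n m : (Rn n)@_m != 0 -> exists i : 'I_n.+1, m = mono2 i (n - i).
Proof.
rewrite [m]mono2_ext Rn_coef; case: ifP => // /eqP H _.
have Hi : (m ord0 < n.+1)%N by lia.
by exists (Ordinal Hi) => /=; congr mono2; lia.
Qed.

Lemma inj_Rn n : injective (fun i : 'I_n.+1 => mono2 i (n - i)).
Proof. by move=> j1 j2 /mono2_inj [H _]; apply: val_inj. Qed.

Lemma Rn_homog n : Rn n \is n.-homog.
Proof.
rewrite /Rn; apply: rpred_sum => j _; apply: rpredZ.
rewrite dhomogX; change (mdeg (mono2 j (n - j)) == n).
by rewrite mdeg_mono2 subnKC // -ltnS.
Qed.

Lemma tdegM_Rn n : tdegM (Rn n) = n.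
Proof.
have Rnz : Rn n != 0.
  apply/eqP => H; have := Rn_coef n 0 n; rewrite H mcoeff0 add0n eqxx r0.
  by move/eqP; rewrite eq_sym oner_eq0.
by rewrite /tdegM (msize_homog Rnz (Rn_homog n)).
Qed.

Lemma mcoeff_contract (phi : R) (G : M) w :
  (contract phi G)@_w = \sum_(p <- msupp phi) \sum_(u <- msupp G)
     (if (p <= u)%MM then phi@_p * G@_u * ((u - p)%MM == w)%:R else 0).
Proof.
have ZX (c : 'F_2) (m : 'X_{1..2}) : (c *: ('X_[m] : R))@_w = c * (m == w)%:R.
  by rewrite mcoeffZ mcoeffX.
rewrite /contract raddf_sum; apply: eq_bigr => p _; rewrite raddf_sum big_mkcond.
by apply: eq_bigr => u _; case: ifP => _ //; apply: ZX.
Qed.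

Lemma contract_coef d (C : P2) n b c :
  (contract (form d C) (Rn n))@_(mono2 b c) =
     if (b + c + d == n)%N then rconv d C (b + d) else 0.
Proof.
rewrite mcoeff_contract (sum_msupp (@inj_form d) (@form_supp d C)); last first.
  by move=> m H0; apply: big1 => u _; rewrite H0 !mul0r; case: ifP.
under eq_bigr => j _.
  rewrite (sum_msupp (@inj_Rn n) (@Rn_supp n)); last first.
    by move=> m H0; case: ifP => _ //; rewrite H0 mulr0 mul0r.
  have Hj : (j <= d)%N by rewrite -ltnS.
  under eq_bigr => i _.
    have Hi : (i <= n)%N by rewrite -ltnS.
    rewrite lem_mono2 sub_mono2 eq_mono2 form_coef Rn_coef (subnK Hj) (subnKC Hi) !eqxx.
    over.
  over.
rewrite /=; case: ifP => Hn; last first.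
  apply: big1 => j _; apply: big1 => i _; case: ifP => // /andP [h1 h2].
  case: andP => [[/eqP e1 /eqP e2]|]; last by rewrite mulr0.
  exfalso; move/negbT: Hn => /eqP; apply.
  by move: h1 h2 e1 e2; have := ltn_ord j; have := ltn_ord i; lia.
rewrite /rconv; apply: eq_bigr => j _.
have Hi0 : (b + d - j < n.+1)%N by move/eqP: Hn; have := ltn_ord j; lia.
rewrite (sum_pick Hi0) /=.
  have -> : ((d - j <= b + d - j)%N && (j <= n - (b + d - j))%N) = true.
    by apply/andP; split; move/eqP: Hn; have := ltn_ord j; lia.
  have -> : ((b + d - j - (d - j))%N == b) && ((n - (b + d - j) - j)%N == c) = true.
    by apply/andP; split; apply/eqP; move/eqP: Hn; have := ltn_ord j; lia.
  by rewrite mulr1.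
move=> i Hi; case: ifP => // /andP [h1 h2].
case: andP => [[/eqP e1 /eqP e2]|]; last by rewrite mulr0.
by exfalso; move/negP: Hi; apply; apply/eqP; move: h1 h2 e1 e2; have := ltn_ord j; lia.
Qed.

Lemma ann_form n d (C : P2) :
  (form d C \in In n) <-> (forall a, (d <= a <= n)%N -> rconv d C a = 0).
Proof.
rewrite -topredE /= /In /annihilator; split.
  move/eqP => H a /andP [h1 h2].
  have := contract_coef d C n (a - d) (n - a).
  rewrite H mcoeff0 (_ : (a - d + (n - a) + d == n)%N); last by apply/eqP; lia.
  by rewrite subnK // => ->.
move=> H; apply/eqP/mpolyP => m; rewrite [m]mono2_ext contract_coef mcoeff0.
by case: ifP => // /eqP Hm; apply: H; apply/andP; split; lia.
Qed.

Lemma Delta_form d (C : P2) m : (size C <= d.+1)%N -> C != 0 -> (d <= m)%N ->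
  Delta (form d C) (Rn m) = rconv d C m.
Proof.
move=> sC Cnz dm.
rewrite /Delta tdeg_form // tdegM_Rn dm.
rewrite (sum_msupp (@inj_form d) (@form_supp d C)); last first.
  by move=> p H0; apply: big1 => u _; rewrite H0 mul0r.
rewrite /rconv; apply: eq_bigr => j _.
rewrite big_mkcond (sum_msupp (@inj_Rn m) (@Rn_supp m)); last first.
  by move=> u H0; case: ifP => _ //; rewrite H0 mulr0.
have Hj : (j <= d)%N by rewrite -ltnS.
have Hi0 : (m - j < m.+1)%N by lia.
rewrite (sum_pick Hi0) /=.
  rewrite !ex_mono2 !ez_mono2 form_coef Rn_coef (subnK Hj) (subnKC (leq_subr _ _)) !eqxx.
  rewrite (_ : ((j : nat) == m - (m - j))%N); last by apply/eqP; lia.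
  by rewrite (_ : (Posz (d - j) - Posz (m - j) == Posz d - Posz m)) //; apply/eqP; lia.
move=> i Hi; rewrite !ez_mono2; case: ifP => // /andP [/eqP e1 _].
by exfalso; move/negP: Hi; apply; apply/eqP; have := ltn_ord i; lia.
Qed.

Lemma fgS n : fg n.+1 =
  (let f := (fg n).1 in let g := (fg n).2 in
   let d : int := (tdeg g)%:Z - (tdeg f)%:Z in
   if Delta f (Rn n.+1) == 0 then (f, z * g)
   else if d <= 0 then (f + x ^+ `|d|%N * g, z * g)
   else (x ^+ `|d|%N * f + g, z * f)).
Proof. by []. Qed.

(* Odd steps: the discrepancy vanishes and only g is multiplied by z. *)
Lemma fg_step_odd k :
  fg (k.*2) = (form k.+1 (cden k.+1), form k.+1 ('X * cden k)) ->
  fg (k.*2.+1) = (form k.+1 (cden k.+1), form k.+2 ('X^2 * cden k)).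
Proof.
move=> IH; rewrite fgS IH /= Delta_form ?size_cden ?cden_neq0 //; last by lia.
rewrite rconv_cden; last by apply/andP; split; lia.
by rewrite (_ : (k.*2.+1 == k.*2.+2) = false) ?eqxx ?form_z ?mulrA -?expr2 //; lia.
Qed.

Lemma size_X2cden k : (size (('X^2 : P2) * cden k)%R <= k.+3)%N.
Proof.
apply/leq_sizeP => i Hi; rewrite coefXnM; case: ifP => // _.
apply: (leq_sizeP _ _ (size_cden_le k)); lia.
Qed.

(* Even steps: the discrepancy is 1 and g has larger degree, so the pair
   becomes (x f + g, z f): the three-term recurrence of the convergents. *)
Lemma fg_step_even k :
  fg (k.*2.+1) = (form k.+1 (cden k.+1), form k.+2 ('X^2 * cden k)) ->
  fg (k.+1).*2 = (form k.+2 (cden k.+2), form k.+2 ('X * cden k.+1)).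
Proof.
move=> IH; rewrite (_ : (k.+1).*2 = (k.*2.+1).+1) // fgS IH /=.
rewrite Delta_form ?size_cden ?cden_neq0 //; last by lia.
rewrite rconv_cden; last by apply/andP; split; lia.
have X2nz : ('X^2 : P2) * cden k != 0.
  by rewrite mulf_eq0 negb_or expf_neq0 ?polyX_eq0 // cden_neq0.
rewrite eqxx !tdeg_form ?size_X2cden ?size_cden ?cden_neq0 //.
rewrite (_ : (Posz k.+2 - Posz k.+1) = 1); last by lia.
by rewrite /= expr1 form_x ?size_cden // -formD -cdenSS form_z.
Qed.

Lemma fg_convergents k :
  fg (k.*2) = (form k.+1 (cden k.+1), form k.+1 ('X * cden k)) /\
  fg (k.*2.+1) = (form k.+1 (cden k.+1), form k.+2 ('X^2 * cden k)).
Proof.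
suff Heven : fg (k.*2) = (form k.+1 (cden k.+1), form k.+1 ('X * cden k)).
  by split => //; apply: fg_step_odd.
elim: k => [|k IH]; last by apply/fg_step_even/fg_step_odd.
have -> : cden 1 = 1 + 'X by [].
rewrite /= /cden mulr1 formD -form_x ?size_poly1 // form_one mulr1.
by rewrite -[X in form 1 X]mulr1 -form_z form_one mulr1.
Qed.

Lemma fk_eq n : fk n = form (n./2).+1 (cden (n./2).+1).
Proof.
have [Eeven Eodd] := fg_convergents n./2.
rewrite /fk -[in LHS](odd_double_half n).
by case: (odd n); [rewrite add1n Eodd | rewrite add0n Eeven].
Qed.

Lemma gk_eq n : ~~ odd n -> gk n = form (n./2).+1 ('X * cden (n./2)).
Proof.
move=> ev; rewrite /gk -[in LHS](odd_double_half n) (negbTE ev) add0n.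
by have [-> _] := fg_convergents n./2.
Qed.

Lemma normalized_form d (C : P2) : (size C <= d.+1)%N -> C`_0 = 1 ->
  inL (form d C) /\ tdeg (form d C) = d.
Proof. by move=> sC C0; rewrite tdeg_form ?neq0_coef0 //; split=> //; apply: inL_form. Qed.

Lemma normalized_cden k : (size (cden k.+1) <= k.+2)%N /\ (cden k.+1)`_0 = 1.
Proof. by rewrite size_cden cden0. Qed.

Lemma normalized_cden_sum k :
  (size (cden k.+1 + 'X * cden k)%R <= k.+2)%N /\ (cden k.+1 + 'X * cden k)`_0 = 1.
Proof.
split; last by rewrite coefD cden0 coefXM eqxx addr0.
by apply: (leq_trans (size_polyD _ _)); rewrite geq_max size_Xcden size_cden leqnn.
Qed.

Lemma minimal_annihilators n theta : theta \in In n -> inL theta ->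
  (tdeg theta <= (n./2).+1)%N ->
  tdeg theta = (n./2).+1 /\
  (theta = fk n \/ (~~ odd n /\ theta = fk n + gk n)).
Proof.
move=> Hin HL Hle; have [E sC C0] := inL_formE HL.
rewrite E in Hin; move/ann_form: Hin => Hann.
have [Hd HC] := classify sC C0 Hle Hann; split=> //.
rewrite E Hd; case: HC => [->|[ev ->]]; first by left; rewrite fk_eq.
by right; rewrite formD fk_eq gk_eq.
Qed.

Lemma annihilator_deg n theta : theta \in In n -> inL theta ->
  ((n./2).+1 <= tdeg theta)%N.
Proof.
move=> Hin HL; rewrite leqNgt; apply/negP => Hlt.
have [Hd _] := minimal_annihilators Hin HL (ltnW Hlt).
by move: Hlt; rewrite Hd ltnn.
Qed.

Lemma inTheta_form n (C : P2) :
  (size C <= (n./2).+2)%N -> C`_0 = 1 -> form (n./2).+1 C \in In n ->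
  inTheta n (form (n./2).+1 C).
Proof.
move=> sC C0 Hin; have [HL Hdeg] := normalized_form sC C0.
by split=> // theta' Hin' HL'; rewrite Hdeg; apply: annihilator_deg.
Qed.

Lemma fk_inTheta n : inTheta n (fk n).
Proof.
have [sC C0] := normalized_cden n./2; rewrite fk_eq; apply: inTheta_form => //.
apply/ann_form => a /andP [h1 h2]; rewrite rconv_cden; last by apply/andP; split; lia.
by rewrite (_ : (a == _) = false) //; apply/negbTE; have := odd_double_half n; lia.
Qed.

Lemma fkgk_inTheta n : ~~ odd n -> inTheta n (fk n + gk n).
Proof.
move=> ev; have [sC C0] := normalized_cden_sum n./2.
rewrite fk_eq gk_eq // -formD; apply: inTheta_form => //.
have Hn := odd_double_half n; rewrite (negbTE ev) in Hn.
apply/ann_form => a /andP [h1 h2].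
rewrite rconvD rconv_cden ?rconv_Xcden ?addr0; try by apply/andP; split; lia.
by rewrite (_ : (a == _) = false) //; apply/negbTE; lia.
Qed.

Theorem corollary4 (n : nat) (theta : {mpoly 'F_2[2]}) :
  inTheta n theta <->
  (if odd n then theta = fk n
   else theta = fk n \/ theta = (fk n + gk n)%R).
Proof.
split=> [[Hin HL Hmin]|].
  have [fIn fL _] := fk_inTheta n.
  have fdeg : tdeg (fk n) = (n./2).+1.
    by rewrite fk_eq; case: (normalized_cden n./2) => sC C0; case: (normalized_form sC C0).
  have Hle := Hmin _ fIn fL; rewrite fdeg in Hle.
  have [_ [->|[ev ->]]] := minimal_annihilators Hin HL Hle.
    by case: (odd n); [|left].
  by rewrite (negbTE ev); right.
case: ifP => [_ ->|ev]; first exact: fk_inTheta.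
by case=> ->; [exact: fk_inTheta | apply: fkgk_inTheta; rewrite ev].
Qed.
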